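(* For every $\mathcal{L}_{\mathrm{Int}}$-formula $A$: $A$ is a theorem of intuitionistic propositional logic $\mathsf{Int}$ if and only if $Tr(A)$ is a theorem of Visser's basic propositional logic $\mathsf{BPL}$.
   Context: $\mathcal{L}_{\mathrm{Int}}$-formulae are built from propositional letters and $\bot$ by $\wedge,\vee,\rightarrow$. $\mathsf{BPL}$ (language: letters, $\bot,\top,\wedge,\vee,\rightarrow$) is the set of formulae true at every point of every Kripke model $(W,R,V)$ with $R$ transitive and $V$ persistent ($w\in V(p)$ and $wRv$ imply $v\in V(p)$), where $\wedge,\vee,\top,\bot$ are evaluated pointwise and $w\models A\rightarrow B$ iff for every $v$ with $wRv$, $v\models A$ implies $v\models B$. Weight: $w(p)=w(\bot)=2$, $w(A\wedge B)=w(A)(1+w(B))$, $w(A\vee B)=1+w(A)+w(B)$, $w(A\rightarrow B)=1+w(A)w(B)$. For $n\ge1$: $\top^1\rightarrow B:=\top\rightarrow B$, $\top^{n+1}\rightarrow B:=\top\rightarrow(\top^n\rightarrow B)$. Positive/negative translations: for $q$ a letter or $\bot$, $q^{+n}=\top^n\rightarrow q$, $q^{-n}=q$; for $\circ\in\{\wedge,\vee\}$, $(A\circ B)^{+n}=\top^n\rightarrow(A^{+n}\circ B^{+n})$, $(A\circ B)^{-n}=A^{-n}\circ B^{-n}$; $(A\rightarrow B)^{+n}=\top^n\rightarrow(A^{-n}\rightarrow B^{+n})$, $(A\rightarrow B)^{-n}=A^{+n}\rightarrow B^{-n}$. The translation is $Tr(A):=A^{+w(A)}$. *)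

From Stdlib Require Import Arith.

Inductive IForm : Type :=
| IVar : nat -> IForm
| IBot : IForm
| IAnd : IForm -> IForm -> IForm
| IOr  : IForm -> IForm -> IForm
| IImp : IForm -> IForm -> IForm.

Inductive BForm : Type :=
| BVar : nat -> BForm
| BBot : BForm
| BTop : BForm
| BAnd : BForm -> BForm -> BForm
| BOr  : BForm -> BForm -> BForm
| BImp : BForm -> BForm -> BForm.

Fixpoint emb (A : IForm) : BForm :=
  match A with
  | IVar p => BVar p
  | IBot => BBot
  | IAnd A B => BAnd (emb A) (emb B)
  | IOr A B => BOr (emb A) (emb B)
  | IImp A B => BImp (emb A) (emb B)
  end.

Fixpoint weight (A : IForm) : nat :=
  match A with
  | IVar _ => 2
  | IBot => 2
  | IAnd A B => weight A * (1 + weight B)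
  | IOr A B => 1 + weight A + weight B
  | IImp A B => 1 + weight A * weight B
  end.

(* top_imp n B = T -> (T -> ... (T -> B)) with n copies of T.
   For n >= 1 this is exactly T^n -> B of the paper (top_imp 0 B = B is
   never used by the translation since weights are >= 2). *)
Fixpoint top_imp (n : nat) (B : BForm) : BForm :=
  match n with
  | 0 => B
  | S k => BImp BTop (top_imp k B)
  end.

(* Positive (pos = true) and negative (pos = false) translations A^{+n}, A^{-n}. *)
Fixpoint trans (pos : bool) (n : nat) (A : IForm) : BForm :=
  match A with
  | IVar p => if pos then top_imp n (BVar p) else BVar p
  | IBot => if pos then top_imp n BBot else BBot
  | IAnd A B =>
      if pos then top_imp n (BAnd (trans true n A) (trans true n B))
      else BAnd (trans false n A) (trans false n B)
  | IOr A B =>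
      if pos then top_imp n (BOr (trans true n A) (trans true n B))
      else BOr (trans false n A) (trans false n B)
  | IImp A B =>
      if pos then top_imp n (BImp (trans false n A) (trans true n B))
      else BImp (trans true n A) (trans false n B)
  end.

Definition Tr (A : IForm) : BForm := trans true (weight A) A.

Fixpoint forces {W : Type} (R : W -> W -> Prop) (V : nat -> W -> Prop)
  (w : W) (A : BForm) : Prop :=
  match A with
  | BVar p => V p w
  | BBot => False
  | BTop => True
  | BAnd A B => forces R V w A /\ forces R V w B
  | BOr A B => forces R V w A \/ forces R V w B
  | BImp A B => forall v, R w v -> forces R V v A -> forces R V v B
  end.

Definition persistent {W : Type} (R : W -> W -> Prop) (V : nat -> W -> Prop) : Prop :=
  forall p w v, V p w -> R w v -> V p v.

Definition transitive_rel {W : Type} (R : W -> W -> Prop) : Prop :=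
  forall x y z, R x y -> R y z -> R x z.

Definition reflexive_rel {W : Type} (R : W -> W -> Prop) : Prop :=
  forall x, R x x.

Definition BPL_thm (A : BForm) : Prop :=
  forall (W : Type) (R : W -> W -> Prop) (V : nat -> W -> Prop),
    transitive_rel R -> persistent R V -> forall w, forces R V w A.

Definition Int_thm (A : IForm) : Prop :=
  forall (W : Type) (R : W -> W -> Prop) (V : nat -> W -> Prop),
    reflexive_rel R -> transitive_rel R -> persistent R V ->
    forall w, forces R V w (emb A).

From Stdlib Require Import Arith Lia List Classical ClassicalDescription.
Import ListNotations.

(* In a reflexive model [T -> B] is equivalent to [B], so [Tr A] is equivalent
   to [A] there; as intuitionistic models are BPL models, this gives the
   backward direction.

   Conversely, fix a transitive model and let [F] be the list of negative
   translations [B^{-n}] of the consequents of implications [B1 -> B] in [A];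
   it has fewer than [n = w(A)] members.  The number of members of [F] forced
   grows weakly along [R].  Call [x] stationary if some successor of [x] forces
   no member of [F] that [x] does not force.  Along a chain of non-stationary
   successors the count strictly increases, so [T^n -> G] holds at [x] as soon
   as [G] holds at every stationary point of the reflexive cone of [x].  The
   stationary points with the reflexive closure of [R] form an intuitionistic
   model, and by induction on subformulae [A^{+n}] is forced at [x] whenever
   [A] is forced everywhere in that model. *)

Section Kripke.

Variables (W : Type) (R : W -> W -> Prop) (V : nat -> W -> Prop).
Hypothesis R_trans : transitive_rel R.
Hypothesis V_pers : persistent R V.

Lemma forces_persistent A w v : forces R V w A -> R w v -> forces R V v A.
Proof. revert w v; induction A; simpl; intros w v Hw Hwv; firstorder. Qed.

Lemma forces_top_imp_intro m G x : forces R V x G -> forces R V x (top_imp m G).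
Proof.
  revert x; induction m as [|m IHm]; simpl; intros x Hx; auto.
  intros v Hxv _; apply IHm; eapply forces_persistent; eauto.
Qed.

Lemma forces_top_imp_refl :
  reflexive_rel R -> forall m G x, forces R V x (top_imp m G) <-> forces R V x G.
Proof.
  intros R_refl m; induction m as [|m IHm]; simpl; intros G x; [tauto|].
  split.
  - intros H; apply IHm, H; auto.
  - intros H v Hxv _; apply IHm; eapply forces_persistent; eauto.
Qed.

Lemma forces_trans_refl :
  reflexive_rel R -> forall n C pos x, forces R V x (trans pos n C) <-> forces R V x (emb C).
Proof.
  intros R_refl n C; induction C as [p| |C1 IH1 C2 IH2|C1 IH1 C2 IH2|C1 IH1 C2 IH2];
    intros pos x; destruct pos; simpl; rewrite ?forces_top_imp_refl by auto; simpl;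
    try tauto.
  - rewrite (IH1 true), (IH2 true); tauto.
  - rewrite (IH1 false), (IH2 false); tauto.
  - rewrite (IH1 true), (IH2 true); tauto.
  - rewrite (IH1 false), (IH2 false); tauto.
  - split; intros H v Hv; [rewrite <- (IH1 false), <- (IH2 true)
                          | rewrite (IH1 false), (IH2 true)]; auto.
  - split; intros H v Hv; [rewrite <- (IH1 true), <- (IH2 false)
                          | rewrite (IH1 true), (IH2 false)]; auto.
Qed.

Fixpoint forced_count (l : list BForm) (x : W) : nat :=
  match l with
  | [] => 0
  | G :: l' =>
      (if excluded_middle_informative (forces R V x G) then 1 else 0) + forced_count l' x
  end.

Lemma forced_count_le_length l x : forced_count l x <= length l.
Proof.
  induction l as [|G l IHl]; simpl; auto.
  destruct excluded_middle_informative; lia.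
Qed.

Lemma forced_count_mono l x y : R x y -> forced_count l x <= forced_count l y.
Proof.
  intros Hxy; induction l as [|G l IHl]; simpl; auto.
  destruct (excluded_middle_informative (forces R V x G));
  destruct (excluded_middle_informative (forces R V y G)); try lia.
  exfalso; eauto using forces_persistent.
Qed.

Lemma forced_count_lt l x y : R x y ->
  ~ (forall G, In G l -> forces R V y G -> forces R V x G) ->
  forced_count l x < forced_count l y.
Proof.
  intros Hxy; induction l as [|G l IHl]; simpl; intros Hnot.
  - exfalso; apply Hnot; intros G [].
  - pose proof (forced_count_mono l x y Hxy).
    destruct (classic (forces R V y G -> forces R V x G)) as [HG|HG].
    + assert (forced_count l x < forced_count l y).
      { apply IHl; intros Hl; apply Hnot; intros G' [<-|HG']; auto. }
      destruct (excluded_middle_informative (forces R V x G));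
      destruct (excluded_middle_informative (forces R V y G)); try lia.
      exfalso; eauto using forces_persistent.
    + destruct (excluded_middle_informative (forces R V x G));
      destruct (excluded_middle_informative (forces R V y G)); try lia; tauto.
Qed.

End Kripke.

Section Stationary.

Variables (W : Type) (R : W -> W -> Prop) (V : nat -> W -> Prop).
Hypothesis R_trans : transitive_rel R.
Hypothesis V_pers : persistent R V.
Variable F : list BForm.

Definition stationary (s : W) : Prop :=
  exists s', R s s' /\ forall G, In G F -> forces R V s' G -> forces R V s G.

Lemma forces_top_imp_of_stationary G m x :
  (forall s, stationary s -> s = x \/ R x s -> forces R V s G) ->
  length F < m + forced_count W R V F x -> forces R V x (top_imp m G).
Proof.
  revert x; induction m as [|m IHm]; simpl; intros x HG Hlen.
  - pose proof (forced_count_le_length W R V F x); lia.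
  - intros y Hxy _.
    destruct (classic (forall G', In G' F -> forces R V y G' -> forces R V x G'))
      as [Hstat|Hnot].
    + apply forces_top_imp_intro; auto.
      eapply forces_persistent; eauto.
      apply HG; [exists y; auto | auto].
    + apply IHm.
      * intros s Hs [<-|Hys]; apply HG; auto. right; eauto.
      * pose proof (forced_count_lt W R V R_trans V_pers F x y Hxy Hnot); lia.
Qed.

Definition stat_world := {s : W | stationary s}.

Definition stat_rel (a b : stat_world) : Prop :=
  proj1_sig a = proj1_sig b \/ R (proj1_sig a) (proj1_sig b).

Definition stat_val (p : nat) (a : stat_world) : Prop := V p (proj1_sig a).

Lemma stat_rel_refl : reflexive_rel stat_rel.
Proof. intros a; left; auto. Qed.

Lemma stat_rel_trans : transitive_rel stat_rel.
Proof.
  intros a b c [Hab|Hab] [Hbc|Hbc]; unfold stat_rel.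
  - left; congruence.
  - right; rewrite Hab; auto.
  - right; rewrite <- Hbc; auto.
  - right; eauto.
Qed.

Lemma stat_val_persistent : persistent stat_rel stat_val.
Proof.
  intros p a b Ha [E|E]; unfold stat_val in *; [rewrite <- E; auto | eauto].
Qed.

Lemma forces_stat_persistent A a b :
  forces stat_rel stat_val a A -> stat_rel a b -> forces stat_rel stat_val b A.
Proof.
  apply forces_persistent; [apply stat_rel_trans | apply stat_val_persistent].
Qed.

Variable n : nat.
Hypothesis F_short : length F < n.

Definition pos_body (C : IForm) : BForm :=
  match C with
  | IVar p => BVar p
  | IBot => BBot
  | IAnd A B => BAnd (trans true n A) (trans true n B)
  | IOr A B => BOr (trans true n A) (trans true n B)
  | IImp A B => BImp (trans false n A) (trans true n B)
  end.

Lemma trans_pos_top_imp C : trans true n C = top_imp n (pos_body C).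
Proof. destruct C; reflexivity. Qed.

Fixpoint neg_consequents (C : IForm) : list BForm :=
  match C with
  | IAnd A B | IOr A B => neg_consequents A ++ neg_consequents B
  | IImp A B => trans false n B :: neg_consequents A ++ neg_consequents B
  | _ => []
  end.

Lemma forces_trans_pos_of_cone C :
  (forall s, forces stat_rel stat_val s (emb C) -> forces R V (proj1_sig s) (pos_body C)) ->
  forall x, (forall s : stat_world, proj1_sig s = x \/ R x (proj1_sig s) ->
                                    forces stat_rel stat_val s (emb C)) ->
  forces R V x (trans true n C).
Proof.
  intros Hbody x Hcone; rewrite trans_pos_top_imp.
  apply forces_top_imp_of_stationary; [|lia].
  intros s Hs Hxs; apply (Hbody (exist _ s Hs)), Hcone; exact Hxs.
Qed.

Lemma forces_trans_pos_of_stat C :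
  (forall s, forces stat_rel stat_val s (emb C) -> forces R V (proj1_sig s) (pos_body C)) ->
  forall s, forces stat_rel stat_val s (emb C) -> forces R V (proj1_sig s) (trans true n C).
Proof.
  intros Hbody s Hs; apply forces_trans_pos_of_cone; auto.
  intros t Hst; eapply forces_stat_persistent; eauto.
  destruct Hst as [E|E]; [left | right]; auto.
Qed.

Lemma stat_forces_trans C : incl (neg_consequents C) F ->
  (forall s, forces stat_rel stat_val s (emb C) -> forces R V (proj1_sig s) (pos_body C)) /\
  (forall s, forces R V (proj1_sig s) (trans false n C) -> forces stat_rel stat_val s (emb C)).
Proof.
  induction C as [p| |C1 IH1 C2 IH2|C1 IH1 C2 IH2|C1 IH1 C2 IH2]; simpl; intros Hincl;
    [split; auto .. | | | apply incl_cons_inv in Hincl as [HF Hincl]];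
    apply incl_app_inv in Hincl as [Hincl1 Hincl2];
    destruct (IH1 Hincl1) as [P1 N1]; destruct (IH2 Hincl2) as [P2 N2].
  - split; intros s [H1 H2]; split;
      auto using forces_trans_pos_of_stat.
  - split; intros s [H1|H2]; [left|right|left|right];
      auto using forces_trans_pos_of_stat.
  - split.
    + intros s Hs z Hsz Hz; apply forces_trans_pos_of_cone; auto.
      intros t Ht; apply Hs.
      * right; destruct Ht as [<-|Ht]; eauto.
      * apply N1; destruct Ht as [<-|Ht]; [auto | eapply forces_persistent; eauto].
    + intros s Hs t Hst Ht; apply N2.
      assert (Ht' : forces R V (proj1_sig t) (trans true n C1))
        by (apply forces_trans_pos_of_stat; auto).
      destruct Hst as [E|Hst]; [|apply Hs; auto].
      (* [t] is [s] itself, where the implication of [Hs] does not apply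
         directly: pass to the stationarity witness, which forces no more of
         [F] than [s] does. *)
      destruct s as [x [s' [Hxs' Hback]]]; simpl in *; subst x.
      apply Hback; [exact HF|].
      apply Hs; auto; eapply forces_persistent; eauto.
Qed.

End Stationary.

Lemma neg_consequents_length n A : length (neg_consequents n A) + 2 <= weight A.
Proof.
  induction A as [p| |A1 IH1 A2 IH2|A1 IH1 A2 IH2|A1 IH1 A2 IH2]; simpl;
    rewrite ?length_app; try lia.
  - assert (weight A2 <= weight A1 * weight A2) by (apply Nat.le_mul_l; lia).
    rewrite Nat.mul_succ_r; lia.
  - assert (2 * weight A2 <= weight A1 * weight A2) by (apply Nat.mul_le_mono_r; lia).
    assert (2 * weight A1 <= weight A2 * weight A1) by (apply Nat.mul_le_mono_r; lia).
    rewrite (Nat.mul_comm (weight A2)) in *; lia.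
Qed.

Theorem theorem5p8 : forall A : IForm, Int_thm A <-> BPL_thm (Tr A).
Proof.
  intros A; split.
  - intros HInt W R V R_trans V_pers w; unfold Tr.
    set (F := neg_consequents (weight A) A).
    assert (F_short : length F < weight A)
      by (pose proof (neg_consequents_length (weight A) A); unfold F; lia).
    destruct (stat_forces_trans W R V R_trans V_pers F _ F_short A (incl_refl _))
      as [Hbody _].
    apply (forces_trans_pos_of_cone W R V R_trans V_pers F _ F_short A Hbody).
    intros s _; apply HInt;
      [apply stat_rel_refl | apply stat_rel_trans; auto | apply stat_val_persistent; auto].
  - intros HBPL W R V R_refl R_trans V_pers w.
    rewrite <- (forces_trans_refl W R V R_trans V_pers R_refl (weight A) A true).
    apply HBPL; auto.
Qed.
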